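(* Consider $N$ agents with dynamics $p_i^{(k+1)}=p_i^{(k)}+v_i^{(k)}$, $v_i^{(k+1)}=v_i^{(k)}+u_i^{(k)}$ and control law $u_i^{(k)}=\sum_{j}\gamma_1a_{ij}^{(k)}(p_j^{(k)}-p_i^{(k)})+\gamma_2a_{ij}^{(k)}(v_j^{(k)}-v_i^{(k)})$. Let $\mathcal{A}^{(0)}=(a_{ij}^{(0)})$ be a symmetric nonnegative matrix with zero diagonal whose graph is connected, and assume $\gamma_2>\gamma_1>0$ and $\gamma_1-2\gamma_2>-4/\mu_i^{(0)}$ for every nonzero eigenvalue $\mu_i^{(0)}$ of the Laplacian $L^{(0)}$ of $\mathcal{A}^{(0)}$. Then there exists $\delta_A>0$ with $\delta_A<\min\{a_{ij}^{(0)}: a_{ij}^{(0)}>0\}$ such that the following holds: if for every $k\ge0$ and every edge $\{i,j\}$ (i.e. $a_{ij}^{(0)}>0$) the weight is $a_{ij}^{(k)}=a_{ji}^{(k)}=\alpha_{i,j}^{(k)}\alpha_{j,i}^{(k)}$ for arbitrary numbers $\alpha_{i,j}^{(k)},\alpha_{j,i}^{(k)}\in\big(\sqrt{a_{ij}^{(0)}-\delta_A},\sqrt{a_{ij}^{(0)}+\delta_A}\big)$, and $a_{ij}^{(k)}=0$ for non-edges, then the agents reach consensus for every initial condition: $p_i^{(k)}-p_j^{(k)}\to0$ and $v_i^{(k)}-v_j^{(k)}\to0$ as $k\to\infty$ for all $i,j$.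
   Context: The Laplacian $L=(l_{ij})$ of a symmetric nonnegative matrix $\mathcal{A}=(a_{ij})$ with zero diagonal is $l_{ij}=-a_{ij}$ for $i\neq j$, $l_{ii}=\sum_{j\neq i}a_{ij}$. The factorization of each weight into two random factors, each held privately by one endpoint, models the decoupled-weight scheme used together with Paillier encryption; the values of the factors may be arbitrary within the stated intervals. *)

From Stdlib Require Import Reals Lra Arith.
Open Scope R_scope.

Fixpoint rsum (n : nat) (f : nat -> R) : R :=
  match n with
  | O => 0
  | S m => rsum m f + f m
  end.

Definition laplacian (N : nat) (A : nat -> nat -> R) (i j : nat) : R :=
  if Nat.eq_dec i j
  then rsum N (fun l => if Nat.eq_dec l i then 0 else A i l)
  else - A i j.

(* mu is an eigenvalue of the N x N matrix M (real eigenvector; M symmetric). *)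
Definition is_eigenvalue (N : nat) (M : nat -> nat -> R) (mu : R) : Prop :=
  exists x : nat -> R,
    (exists i, (i < N)%nat /\ x i <> 0) /\
    forall i, (i < N)%nat -> rsum N (fun j => M i j * x j) = mu * x i.

Inductive reach (N : nat) (A : nat -> nat -> R) (i : nat) : nat -> Prop :=
  | reach_refl : (i < N)%nat -> reach N A i i
  | reach_step : forall j k, reach N A i j -> (k < N)%nat -> A j k > 0 -> reach N A i k.

Definition connected (N : nat) (A : nat -> nat -> R) : Prop :=
  forall i j, (i < N)%nat -> (j < N)%nat -> reach N A i j.

(* Write r = g1 p + g2 v.  The closed loop is v' = v - L0 r + E, where the coupling
   error E_i = sum_l (a_il - A0_il) (r_l - r_i) is of order dA times the spread of r about its
   mean, since every product weight stays within dA of A0.  Diagonalising the symmetric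
   Laplacian L0, each eigenvalue mu > 0 gives a mode (x, y) -> (x + y, y - mu (g1 x + g2 y)),
   a second-order recursion with characteristic polynomial z^2 - (2 - mu g2) z + 1 - mu (g2 - g1);
   the hypotheses on g1, g2 are exactly its Jury stability conditions, so each such mode has a
   quadratic Lyapunov function that contracts by a fixed factor and tolerates an additive
   disturbance.  By connectivity the eigenvalue 0 only carries the consensus direction, so the
   sum of the mode Lyapunov functions of the deviations from the mean decays geometrically once
   dA is small enough for the coupling error to be absorbed in the contraction. *)

From Stdlib Require Import Reals Lra Lia Psatz Classical.
From mathcomp Require all_boot all_order all_algebra Rstruct complex sesquilinear spectral.
Set Bullet Behavior "Strict Subproofs".
Open Scope R_scope.

(** * Finite sums *)

Lemma rsum_ext n f g : (forall i, (i < n)%nat -> f i = g i) -> rsum n f = rsum n g.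
Proof.
induction n; intros H; simpl; [reflexivity|].
rewrite IHn by (intros; apply H; lia). rewrite H by lia. reflexivity.
Qed.

Lemma rsum_plus n f g : rsum n (fun i => f i + g i) = rsum n f + rsum n g.
Proof. induction n; simpl; [ring|]. rewrite IHn. ring. Qed.

Lemma rsum_minus n f g : rsum n (fun i => f i - g i) = rsum n f - rsum n g.
Proof. induction n; simpl; [ring|]. rewrite IHn. ring. Qed.

Lemma rsum_opp n f : rsum n (fun i => - f i) = - rsum n f.
Proof. induction n; simpl; [ring|]. rewrite IHn. ring. Qed.

Lemma rsum_scal_l n c f : rsum n (fun i => c * f i) = c * rsum n f.
Proof. induction n; simpl; [ring|]. rewrite IHn. ring. Qed.

Lemma rsum_scal_r n c f : rsum n (fun i => f i * c) = rsum n f * c.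
Proof. induction n; simpl; [ring|]. rewrite IHn. ring. Qed.

Lemma rsum_const n c : rsum n (fun _ => c) = INR n * c.
Proof. induction n; simpl rsum; [simpl; ring|]. rewrite IHn, S_INR. ring. Qed.

Lemma rsum_le n f g : (forall i, (i < n)%nat -> f i <= g i) -> rsum n f <= rsum n g.
Proof.
induction n; intros H; simpl; [lra|].
assert (rsum n f <= rsum n g) by (apply IHn; intros; apply H; lia).
assert (f n <= g n) by (apply H; lia). lra.
Qed.

Lemma rsum_nonneg n f : (forall i, (i < n)%nat -> 0 <= f i) -> 0 <= rsum n f.
Proof.
intros H. replace 0 with (rsum n (fun _ => 0)) by (rewrite rsum_const; ring).
now apply rsum_le.
Qed.

Lemma rsum_swap n m (f : nat -> nat -> R) :
  rsum n (fun i => rsum m (fun j => f i j)) = rsum m (fun j => rsum n (fun i => f i j)).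
Proof.
induction n; simpl.
- rewrite rsum_const. ring.
- rewrite IHn, <- rsum_plus. reflexivity.
Qed.

Lemma rsum_term_le n f i :
  (forall j, (j < n)%nat -> 0 <= f j) -> (i < n)%nat -> f i <= rsum n f.
Proof.
induction n; intros H Hi; [lia|]. simpl.
destruct (Nat.eq_dec i n) as [->|Hne].
- assert (0 <= rsum n f) by (apply rsum_nonneg; intros; apply H; lia). lra.
- assert (f i <= rsum n f) by (apply IHn; [intros; apply H; lia | lia]).
  assert (0 <= f n) by (apply H; lia). lra.
Qed.

Lemma rsum_eq0_nonneg n f : (forall j, (j < n)%nat -> 0 <= f j) -> rsum n f = 0 ->
  forall i, (i < n)%nat -> f i = 0.
Proof.
intros H Hs i Hi. assert (f i <= rsum n f) by (apply rsum_term_le; auto).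
assert (0 <= f i) by auto. lra.
Qed.

Lemma rsum_antisym n (F : nat -> nat -> R) :
  (forall i l, (i < n)%nat -> (l < n)%nat -> F i l = - F l i) ->
  rsum n (fun i => rsum n (fun l => F i l)) = 0.
Proof.
intros H.
enough (rsum n (fun i => rsum n (fun l => F i l))
        = - rsum n (fun i => rsum n (fun l => F i l))) by lra.
rewrite rsum_swap at 1.
transitivity (rsum n (fun l => -1 * rsum n (fun i => F l i))).
- apply rsum_ext. intros l Hl. rewrite <- rsum_scal_l.
  apply rsum_ext. intros i Hi. rewrite H by assumption. ring.
- rewrite rsum_scal_l. ring.
Qed.

Lemma rsum_sq_le n z : rsum n z * rsum n z <= INR n * rsum n (fun i => z i * z i).
Proof.
induction n; simpl rsum; [simpl; lra|]. rewrite S_INR.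
set (S := rsum n z) in *. set (Q := rsum n (fun i => z i * z i)) in *.
assert (0 <= Q) by (apply rsum_nonneg; intros; apply Rle_0_sqr).
clearbody S Q.
assert (0 <= INR n) by apply pos_INR.
assert (Hcross : 2 * S * z n <= Q + INR n * (z n * z n)).
{ destruct (Req_dec (INR n) 0) as [Hn0|Hn0].
  - rewrite Hn0 in *. assert (S = 0) by nra. subst S. lra.
  - assert (0 <= (S - INR n * z n) * (S - INR n * z n)) by apply Rle_0_sqr.
    assert (0 <= INR n * (Q + INR n * (z n * z n) - 2 * S * z n)) by nra.
    nra. }
nra.
Qed.

Lemma rsum_if n i a b : (i < n)%nat ->
  rsum n (fun l => if Nat.eq_dec i l then a l else b l) = rsum n b + (a i - b i).
Proof.
induction n; intros Hi; [lia|]. simpl.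
destruct (Nat.eq_dec i n) as [->|Hne].
- rewrite (rsum_ext n _ b); [ring|].
  intros l Hl. destruct (Nat.eq_dec n l); [lia | reflexivity].
- rewrite IHn by lia. ring.
Qed.

(** * Eigenframes of symmetric matrices *)

Definition mxv (N : nat) (M : nat -> nat -> R) (x : nat -> R) (i : nat) : R :=
  rsum N (fun l => M i l * x l).

Definition dot (N : nat) (u x : nat -> R) : R := rsum N (fun i => u i * x i).

Lemma dot_mxv_eigvec N M u x lam :
  (forall i j, (i < N)%nat -> (j < N)%nat -> M i j = M j i) ->
  (forall i, (i < N)%nat -> mxv N M u i = lam * u i) ->
  dot N u (mxv N M x) = lam * dot N u x.
Proof.
intros Msym Hu. unfold dot, mxv.
rewrite (rsum_ext N _ (fun i => rsum N (fun l => u i * M i l * x l)))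
  by (intros; rewrite <- rsum_scal_l; apply rsum_ext; intros; ring).
rewrite rsum_swap, <- rsum_scal_l. apply rsum_ext. intros l Hl.
rewrite (rsum_ext N _ (fun i => M l i * u i * x l))
  by (intros i Hi; rewrite (Msym i l) by assumption; ring).
rewrite rsum_scal_r. fold (mxv N M u l). rewrite Hu by assumption. ring.
Qed.

(* A family of N + N eigenvectors satisfying Parseval's identity.  It arises from the real and
   imaginary parts of the rows of a unitary matrix diagonalising [M], so it need not be a basis. *)
Definition eigen_frame (N : nat) (M : nat -> nat -> R) (f : nat -> nat -> R) (mu : nat -> R) :=
  (forall j i, (j < N + N)%nat -> (i < N)%nat -> mxv N M (f j) i = mu j * f j i) /\
  (forall x, rsum (N + N) (fun j => dot N (f j) x * dot N (f j) x) = rsum N (fun i => x i * x i)).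

Module Spectral_frame.
Import all_boot all_order all_algebra Rstruct complex sesquilinear spectral.
Import GRing.Theory Num.Theory.
Local Open Scope ring_scope.
Local Open Scope sesquilinear_scope.
Local Notation Re := (@complex.Re R).
Local Notation Im := (@complex.Im R).
Local Notation rc x := (real_complex R x).

Lemma rsum_big n (f : nat -> R) : rsum n f = \sum_(i < n) f i.
Proof. by elim: n => [|n IH]; rewrite ?big_ord0 // big_ord_recr /= IH. Qed.

Lemma rsum_addn n m (f : nat -> R) : rsum (n + m) f = rsum n f + rsum m (fun k => f (n + k)%N).
Proof. by elim: m => [|m IH]; rewrite ?addn0 ?addr0 // addnS /= IH addrA. Qed.

Lemma Re_sum n (F : 'I_n -> R[i]) : Re (\sum_(k < n) F k) = \sum_(k < n) Re (F k).
Proof.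
elim: n F => [|n IH] F; first by rewrite !big_ord0.
by rewrite !big_ord_recr -IH; case: (\sum_(k < n) _) => ? ?; case: (F _).
Qed.

Lemma Im_sum n (F : 'I_n -> R[i]) : Im (\sum_(k < n) F k) = \sum_(k < n) Im (F k).
Proof.
elim: n F => [|n IH] F; first by rewrite !big_ord0.
by rewrite !big_ord_recr -IH; case: (\sum_(k < n) _) => ? ?; case: (F _).
Qed.

Lemma Re_mul_real (a : R[i]) (x : R) : Re (a * rc x) = Re a * x.
Proof. by case: a => a b /=; rewrite mulr0 subr0. Qed.

Lemma Im_mul_real (a : R[i]) (x : R) : Im (a * rc x) = Im a * x.
Proof. by case: a => a b /=; rewrite mulr0 add0r. Qed.

Section Frame.
Variables (n : nat) (L : nat -> nat -> R).
Hypothesis L_sym : forall i j, (i < n.+1)%coq_nat -> (j < n.+1)%coq_nat -> L i j = L j i.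
Variables (P : 'M[R[i]]_n.+1) (d : 'rV[R[i]]_n.+1).
Hypothesis P_unitary : P ^t* *m P = 1%:M.
Hypothesis d_real : forall k, Im (d 0 k) = 0.
Hypothesis P_eig : forall k l : 'I_n.+1, \sum_(i < n.+1) P k i * rc (L i l) = d 0 k * P k l.

Definition frame_vec (j i : nat) : R :=
  if (j < n.+1)%N then Re (P (inord j) (inord i)) else Im (P (inord ((j - n.+1)%N)) (inord i)).
Definition frame_val (j : nat) : R :=
  Re (d 0 (inord (if (j < n.+1)%N then j else (j - n.+1)%N))).

Lemma P_eig_Re (k : 'I_n.+1) i : (i < n.+1)%N ->
  \sum_(l < n.+1) Re (P k l) * L l i = Re (d 0 k) * Re (P k (inord i)).
Proof.
move=> Hi; have := congr1 Re (P_eig k (inord i)); rewrite Re_sum inordK //.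
under eq_bigr => l _ do rewrite Re_mul_real.
move=> ->; case: (d 0 k) (d_real k) => a b /= ->.
by case: (P k _) => u w /=; rewrite mul0r subr0.
Qed.

Lemma P_eig_Im (k : 'I_n.+1) i : (i < n.+1)%N ->
  \sum_(l < n.+1) Im (P k l) * L l i = Re (d 0 k) * Im (P k (inord i)).
Proof.
move=> Hi; have := congr1 Im (P_eig k (inord i)); rewrite Im_sum inordK //.
under eq_bigr => l _ do rewrite Im_mul_real.
move=> ->; case: (d 0 k) (d_real k) => a b /= ->.
by case: (P k _) => u w /=; rewrite mul0r addr0 mulrC.
Qed.

Lemma frame_eigen j i : (i < n.+1)%coq_nat ->
  mxv n.+1 L (frame_vec j) i = frame_val j * frame_vec j i.
Proof.
move=> /ltP Hi; rewrite /mxv rsum_big /frame_vec /frame_val.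
have Lsym (l : 'I_n.+1) : L i l = L l i by rewrite L_sym //; apply/ltP.
case: ifP => _; rewrite -?P_eig_Re -?P_eig_Im //;
  by apply: eq_bigr => l _; rewrite RmultE inord_val mulrC Lsym.
Qed.

Let coef (x : nat -> R) (k : 'I_n.+1) : R[i] := \sum_(i < n.+1) P k i * rc (x i).

Lemma dot_frame_Re (k : 'I_n.+1) x : dot n.+1 (frame_vec k) x = Re (coef x k).
Proof.
rewrite /dot rsum_big /coef Re_sum; apply: eq_bigr => i _.
by rewrite /frame_vec ltn_ord !inord_val Re_mul_real.
Qed.

Lemma dot_frame_Im (k : 'I_n.+1) x : dot n.+1 (frame_vec (n.+1 + k)) x = Im (coef x k).
Proof.
rewrite /dot rsum_big /coef Im_sum; apply: eq_bigr => i _.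
by rewrite /frame_vec ltnNge leq_addr /= addKn !inord_val Im_mul_real.
Qed.

Lemma coef_norm x : \sum_(k < n.+1) coef x k * (coef x k)^* = \sum_(i < n.+1) rc (x i * x i).
Proof.
pose X : 'cV[R[i]]_n.+1 := \col_i rc (x i).
have EX k : coef x k = \sum_(i < n.+1) P k i * X i 0.
  by apply: eq_bigr => i _; rewrite mxE.
have E : ((P *m X) ^t* *m (P *m X)) 0 0 = \sum_(k < n.+1) coef x k * (coef x k)^*.
  by rewrite !mxE; apply: eq_bigr => k _; rewrite !mxE -EX mulrC.
rewrite -E trmx_mul map_mxM mulmxA -(mulmxA _ _ P) P_unitary mulmx1 !mxE.
apply: eq_bigr => i _; rewrite !mxE.
by rewrite -[X in X * _ = _]/((rc (x i))^*) conj_Creal ?complex_real // rmorphM.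
Qed.

Lemma frame_parseval x :
  rsum (n.+1 + n.+1) (fun j => dot n.+1 (frame_vec j) x * dot n.+1 (frame_vec j) x)
  = rsum n.+1 (fun i => x i * x i).
Proof.
rewrite rsum_addn !rsum_big.
under eq_bigr => k _ do rewrite dot_frame_Re.
under [X in _ + X = _]eq_bigr => k _ do rewrite dot_frame_Im.
apply: complexI; rewrite rmorphD !rmorph_sum -big_split /= -coef_norm.
apply: eq_bigr => k _; rewrite -normCK -add_Re2_Im2 !expr2.
by rewrite rmorphD.
Qed.

End Frame.

Lemma symmetric_eigen_frame N (M : nat -> nat -> R) :
  (forall i j, (i < N)%coq_nat -> (j < N)%coq_nat -> M i j = M j i) ->
  exists f mu, eigen_frame N M f mu.
Proof.
case: N => [|n] Msym.
  by exists (fun _ _ => 0), (fun _ => 0); split=> // j i /ltP.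
pose A : 'M[R[i]]_n.+1 := \matrix_(i, j) rc (M i j).
have AT : A ^t* = A.
  apply/matrixP => i j; rewrite !mxE conj_Creal ?complex_real //.
  by rewrite Msym //; apply/ltP.
have Aherm : A \is hermsymmx by apply/is_hermitianmxP; rewrite expr0 scale1r AT.
have /orthomx_spectralP A_diag : A \is normalmx by rewrite qualifE AT.
set P := spectralmx A in A_diag; set d := spectral_diag A in A_diag.
have P_unitary : P ^t* *m P = 1%:M.
  by rewrite -(invmx_unitary (spectral_unitarymx A)) mulVmx ?spectral_unit.
have d_real k : Im (d 0 k) = 0.
  have /mxOverP/(_ 0 k) := hermitian_spectral_diag_real Aherm.
  by case: (d 0 k) => a b; rewrite complex_real => /eqP.
have P_eig (k l : 'I_n.+1) : \sum_(i < n.+1) P k i * rc (M i l) = d 0 k * P k l.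
  have PA : P *m A = diag_mx d *m P.
    by rewrite {1}A_diag !mulmxA mulmxV ?spectral_unit // mul1mx.
  have := congr1 (fun B : 'M[R[i]]_n.+1 => B k l) PA; rewrite mul_diag_mx !mxE /= => <-.
  by apply: eq_bigr => i _; rewrite mxE.
exists (frame_vec n P), (frame_val n d); split=> [j i _ Hi|x].
  exact: frame_eigen.
exact: frame_parseval.
Qed.

End Spectral_frame.

(** * Graph Laplacians *)

Section Laplacian.
Variables (N : nat) (A : nat -> nat -> R).
Hypothesis A_sym : forall i j, (i < N)%nat -> (j < N)%nat -> A i j = A j i.
Hypothesis A_diag : forall i, (i < N)%nat -> A i i = 0.

Lemma laplacian_sym i j : (i < N)%nat -> (j < N)%nat ->
  laplacian N A i j = laplacian N A j i.
Proof.
intros Hi Hj. unfold laplacian.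
destruct (Nat.eq_dec i j), (Nat.eq_dec j i); subst; try lia; auto.
rewrite A_sym; auto.
Qed.

Lemma mxv_laplacian x i : (i < N)%nat ->
  mxv N (laplacian N A) x i = rsum N (fun l => A i l * (x i - x l)).
Proof.
intros Hi. unfold mxv, laplacian.
assert (Hdeg : rsum N (fun l => if Nat.eq_dec l i then 0 else A i l) = rsum N (A i)).
{ apply rsum_ext. intros l Hl. destruct (Nat.eq_dec l i) as [->|]; [rewrite A_diag|]; auto. }
rewrite Hdeg.
rewrite (rsum_ext N _ (fun l => if Nat.eq_dec i l then rsum N (A i) * x l else - A i l * x l))
  by (intros l Hl; destruct (Nat.eq_dec i l); reflexivity).
rewrite rsum_if by assumption. rewrite A_diag by assumption.
rewrite (rsum_ext N (fun l => A i l * (x i - x l)) (fun l => A i l * x i - A i l * x l))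
  by (intros; ring).
rewrite rsum_minus, rsum_scal_r.
rewrite (rsum_ext N (fun l => - A i l * x l) (fun l => -1 * (A i l * x l))) by (intros; ring).
rewrite rsum_scal_l. ring.
Qed.

Lemma rsum_mxv_laplacian x : rsum N (mxv N (laplacian N A) x) = 0.
Proof.
rewrite (rsum_ext N _ (fun i => rsum N (fun l => A i l * (x i - x l))))
  by (intros; apply mxv_laplacian; auto).
apply rsum_antisym. intros i l Hi Hl. rewrite A_sym by assumption. ring.
Qed.

Lemma laplacian_energy x :
  rsum N (fun i => x i * mxv N (laplacian N A) x i)
  = / 2 * rsum N (fun i => rsum N (fun l => A i l * ((x i - x l) * (x i - x l)))).
Proof.
assert (Hanti : rsum N (fun i => rsum N (fun l => A i l * (x i - x l) * (x i + x l))) = 0).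
{ apply rsum_antisym. intros i l Hi Hl. rewrite A_sym by assumption. ring. }
transitivity (rsum N (fun i => / 2 * rsum N (fun l => A i l * ((x i - x l) * (x i - x l)))
                              + / 2 * rsum N (fun l => A i l * (x i - x l) * (x i + x l)))).
- apply rsum_ext. intros i Hi. rewrite mxv_laplacian by assumption.
  rewrite <- !rsum_scal_l, <- rsum_plus.
  apply rsum_ext. intros; field.
- rewrite rsum_plus, !rsum_scal_l, Hanti. ring.
Qed.

Hypothesis A_nonneg : forall i j, (i < N)%nat -> (j < N)%nat -> 0 <= A i j.

Lemma reach_lt i j : reach N A i j -> (j < N)%nat.
Proof. intros H; induction H; auto. Qed.

Lemma edge_const_on_connected (x : nat -> R) : connected N A ->
  (forall i l, (i < N)%nat -> (l < N)%nat -> A i l > 0 -> x i = x l) ->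
  forall i, (i < N)%nat -> x i = x 0%nat.
Proof.
intros Hc He i Hi.
induction (Hc 0%nat i ltac:(lia) Hi) as [|j k Hr IH Hk Hjk]; auto.
rewrite <- IH by (eapply reach_lt; eauto).
symmetry. apply He; auto. eapply reach_lt; eauto.
Qed.

Section Eigenvector.
Variables (x : nat -> R) (mu : R).
Hypothesis x_eig : forall i, (i < N)%nat -> mxv N (laplacian N A) x i = mu * x i.

Lemma eigvec_energy :
  mu * rsum N (fun i => x i * x i)
  = / 2 * rsum N (fun i => rsum N (fun l => A i l * ((x i - x l) * (x i - x l)))).
Proof.
rewrite <- laplacian_energy, <- rsum_scal_l.
apply rsum_ext. intros i Hi. rewrite x_eig by assumption. ring.
Qed.

Lemma eigvec_sum_eq0 : mu <> 0 -> rsum N x = 0.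
Proof.
intros Hmu. apply (Rmult_eq_reg_l mu); [|assumption].
rewrite <- rsum_scal_l, Rmult_0_r, <- (rsum_mxv_laplacian x).
apply rsum_ext. intros i Hi. now rewrite x_eig.
Qed.

Lemma eigval_pos : mu <> 0 -> (exists i, (i < N)%nat /\ x i <> 0) -> 0 < mu.
Proof.
intros Hmu [i0 [Hi0 Hx0]].
assert (Hsq : 0 < rsum N (fun i => x i * x i)).
{ apply Rlt_le_trans with (x i0 * x i0); [now apply Rsqr_pos_lt|].
  apply (rsum_term_le N (fun i => x i * x i)); auto. intros; apply Rle_0_sqr. }
assert (0 <= mu * rsum N (fun i => x i * x i)).
{ rewrite eigvec_energy. apply Rmult_le_pos; [lra|].
  apply rsum_nonneg. intros i Hi. apply rsum_nonneg. intros l Hl.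
  apply Rmult_le_pos; [auto | apply Rle_0_sqr]. }
nra.
Qed.

Lemma null_eigvec_const : connected N A -> mu = 0 ->
  forall i, (i < N)%nat -> x i = x 0%nat.
Proof.
intros Hc Hmu. apply edge_const_on_connected; [assumption|].
intros i l Hi Hl Hil.
set (E := fun i l => A i l * ((x i - x l) * (x i - x l))).
assert (HE : forall i l, (i < N)%nat -> (l < N)%nat -> 0 <= E i l)
  by (intros; apply Rmult_le_pos; [auto | apply Rle_0_sqr]).
assert (Hrow : rsum N (fun i => rsum N (E i)) = 0).
{ assert (H := eigvec_energy). rewrite Hmu in H. unfold E. lra. }
assert (Hi0 : rsum N (E i) = 0).
{ apply (rsum_eq0_nonneg N (fun i => rsum N (E i))); auto.
  intros; apply rsum_nonneg; auto. }
assert (Hil0 : E i l = 0) by (apply (rsum_eq0_nonneg N (E i)); auto).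
unfold E in Hil0. apply Rmult_integral in Hil0 as [H0|H0]; [lra|].
apply Rmult_integral in H0 as [H0|H0]; lra.
Qed.

Lemma laplacian_eigvec_cases : connected N A ->
  (0 < mu /\ is_eigenvalue N (laplacian N A) mu /\ rsum N x = 0)
  \/ (forall i, (i < N)%nat -> x i = x 0%nat).
Proof.
intros Hc.
destruct (classic (mu <> 0 /\ exists i, (i < N)%nat /\ x i <> 0)) as [[Hmu Hx]|Hnot].
- left. repeat split.
  + now apply eigval_pos.
  + now exists x.
  + now apply eigvec_sum_eq0.
- right. apply not_and_or in Hnot. destruct Hnot as [Hmu|Hx].
  + apply null_eigvec_const; [assumption|]. now apply NNPP.
  + intros i Hi.
    assert (Hz : forall j, (j < N)%nat -> x j = 0).
    { intros j Hj. apply NNPP. intros Hj0. apply Hx. now exists j. }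
    rewrite !Hz by lia. reflexivity.
Qed.

End Eigenvector.
End Laplacian.

(** * Lyapunov functions of the second-order modes *)

Definition quad (q r X Y : R) : R := X * X + 2 * q * X * Y + r * (Y * Y).

Section Quadratic_form.
Variables q r : R.
Hypothesis qr_pos : q * q < r.

Lemma quad_ge_sumsq X Y : (r - q * q) * (X * X + Y * Y) <= (1 + r) * quad q r X Y.
Proof.
unfold quad.
assert (0 <= (q * X + r * Y) * (q * X + r * Y)) by apply Rle_0_sqr.
assert (0 <= (X + q * Y) * (X + q * Y)) by apply Rle_0_sqr.
nra.
Qed.

Lemma quad_nonneg X Y : 0 <= quad q r X Y.
Proof.
assert (H := quad_ge_sumsq X Y).
assert (0 <= X * X) by apply Rle_0_sqr. assert (0 <= Y * Y) by apply Rle_0_sqr.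
assert (0 <= q * q) by apply Rle_0_sqr. nra.
Qed.

Lemma quad_le_sumsq X Y : quad q r X Y <= (1 + q * q + r) * (X * X + Y * Y).
Proof.
unfold quad.
assert (0 <= (q * X - Y) * (q * X - Y)) by apply Rle_0_sqr.
assert (0 <= q * q) by apply Rle_0_sqr.
assert (0 <= X * X) by apply Rle_0_sqr. assert (0 <= Y * Y) by apply Rle_0_sqr.
nra.
Qed.

Lemma quad_shift_le Z X e eps : 0 < eps ->
  quad q r (Z + e) X <= (1 + eps) * quad q r Z X + (1 + / eps) * (e * e).
Proof.
intros Heps.
assert (Hsq : (Z + q * X) * (Z + q * X) <= quad q r Z X)
  by (unfold quad; assert (0 <= X * X) by apply Rle_0_sqr; nra).
assert (Hyoung : 2 * e * (Z + q * X) <= eps * ((Z + q * X) * (Z + q * X)) + / eps * (e * e)).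
{ assert (0 <= eps * ((Z + q * X) - / eps * e) * ((Z + q * X) - / eps * e)).
  { rewrite Rmult_assoc. apply Rmult_le_pos; [lra | apply Rle_0_sqr]. }
  replace (eps * (Z + q * X - / eps * e) * (Z + q * X - / eps * e))
    with (eps * ((Z + q * X) * (Z + q * X)) - 2 * e * (Z + q * X) + / eps * (e * e))
    in H by (field; lra).
  lra. }
replace (quad q r (Z + e) X) with (quad q r Z X + 2 * e * (Z + q * X) + e * e)
  by (unfold quad; ring).
nra.
Qed.

Lemma quad_ge_scaled A1 X Y : 0 <= A1 <= r - q * q ->
  A1 / (1 + q * q + r) * (X * X + Y * Y) <= quad q r X Y.
Proof.
intros HA1. assert (H := quad_ge_sumsq X Y). assert (Hpos := quad_nonneg X Y).
assert (0 <= X * X) by apply Rle_0_sqr. assert (0 <= Y * Y) by apply Rle_0_sqr.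
assert (0 <= q * q) by apply Rle_0_sqr.
apply Rmult_le_reg_l with (1 + q * q + r); [lra|].
replace ((1 + q * q + r) * (A1 / (1 + q * q + r) * (X * X + Y * Y)))
  with (A1 * (X * X + Y * Y)) by (field; lra).
nra.
Qed.

Lemma quad_scaled_le A1 X Y : 0 <= A1 ->
  A1 / (1 + q * q + r) * quad q r X Y <= A1 * (X * X + Y * Y).
Proof.
intros HA1. assert (H := quad_le_sumsq X Y).
assert (0 <= q * q) by apply Rle_0_sqr.
unfold Rdiv. rewrite Rmult_assoc. apply Rmult_le_compat_l; [lra|].
apply Rmult_le_reg_l with (1 + q * q + r); [lra|].
rewrite <- Rmult_assoc, Rinv_r; lra.
Qed.

(* The pair [(X, Y)] is (current, previous) value of the recursion [x' = t x - d x_prev]. *)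
Lemma quad_contract t d A1 : 0 < A1 <= r - q * q ->
  (forall X Y, quad q r (t * X - d * Y) X = quad q r X Y - A1 * (X * X + Y * Y)) ->
  exists th, 0 < th <= 1 /\
    (forall X Y, th * (X * X + Y * Y) <= quad q r X Y) /\
    (forall X Y e, quad q r (t * X - d * Y + e) X <= (1 - th) * quad q r X Y + / th * (e * e)).
Proof.
intros HA1 Hdec.
set (th0 := A1 / (1 + q * q + r)).
assert (Hth0 : 0 < th0 < 1).
{ assert (0 <= q * q) by apply Rle_0_sqr. unfold th0. split; [apply Rdiv_lt_0_compat; lra|].
  apply Rmult_lt_reg_r with (1 + q * q + r); [lra|].
  unfold Rdiv. rewrite Rmult_assoc, Rinv_l; lra. }
assert (Hdecay : forall X Y, quad q r (t * X - d * Y) X <= (1 - th0) * quad q r X Y).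
{ intros X Y. rewrite Hdec. assert (H := quad_scaled_le A1 X Y ltac:(lra)). fold th0 in H. lra. }
set (th := th0 / (th0 + 2)).
assert (Hth : 0 < th <= th0 / 2).
{ unfold th. split; [apply Rdiv_lt_0_compat; lra|].
  apply Rmult_le_compat_l, Rinv_le_contravar; lra. }
exists th. split; [lra|]. split.
- intros X Y. assert (H := quad_ge_scaled A1 X Y ltac:(lra)). fold th0 in H.
  assert (0 <= X * X) by apply Rle_0_sqr. assert (0 <= Y * Y) by apply Rle_0_sqr. nra.
- intros X Y e. replace (/ th) with (1 + / (th0 / 2)) by (unfold th; field; lra).
  assert (H := quad_shift_le (t * X - d * Y) X e (th0 / 2) ltac:(lra)).
  assert (Hd := Hdecay X Y).
  assert (0 <= quad q r X Y) by apply quad_nonneg.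
  assert (0 <= quad q r (t * X - d * Y) X) by apply quad_nonneg.
  nra.
Qed.
End Quadratic_form.

(* [quad (lyap_q t d) (lyap_r t d)] is the form of the matrix P = [[1, q], [q, r]] solving
   the discrete Lyapunov equation M^T P M - P = - A1 I for the companion matrix
   M = [[t, -d], [1, 0]]. *)
Definition lyap_q (t d : R) : R := - (t * d) / (1 + d).
Definition lyap_r (t d : R) : R := (d * d + 1 - t * t * (1 - d) / (1 + d)) / 2.

Lemma companion_contract t d : 0 < 1 - d -> 0 < 1 + d - t -> 0 < 1 + d + t ->
  exists th, 0 < th <= 1 /\
    (forall X Y, th * (X * X + Y * Y) <= quad (lyap_q t d) (lyap_r t d) X Y) /\
    (forall X Y e, quad (lyap_q t d) (lyap_r t d) (t * X - d * Y + e) X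
                   <= (1 - th) * quad (lyap_q t d) (lyap_r t d) X Y + / th * (e * e)).
Proof.
intros H1 H2 H3.
assert (Hd : 0 < 1 + d) by lra.
assert (Hjury : 0 < (1 + d) * (1 + d) - t * t)
  by (replace ((1 + d) * (1 + d) - t * t) with ((1 + d - t) * (1 + d + t)) by ring; nra).
set (A1 := (1 - d) * ((1 + d) * (1 + d) - t * t) / (2 * (1 + d))).
assert (HA1 : 0 < A1) by (unfold A1; apply Rdiv_lt_0_compat; nra).
assert (HA1r : A1 <= lyap_r t d - lyap_q t d * lyap_q t d).
{ replace (lyap_r t d - lyap_q t d * lyap_q t d)
    with (A1 + d * d * ((1 + d) * (1 + d) - t * t) / ((1 + d) * (1 + d)))
    by (unfold A1, lyap_r, lyap_q; field; lra).
  assert (0 <= d * d * ((1 + d) * (1 + d) - t * t) / ((1 + d) * (1 + d))).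
  { apply Rmult_le_pos; [apply Rmult_le_pos; [apply Rle_0_sqr | lra] |].
    apply Rlt_le, Rinv_0_lt_compat. nra. }
  lra. }
apply (quad_contract (lyap_q t d) (lyap_r t d) ltac:(lra) t d A1); [lra|].
intros X Y. unfold quad, lyap_q, lyap_r, A1. field. lra.
Qed.

Definition mode_lyap (g1 g2 mu x y : R) : R :=
  quad (lyap_q (2 - mu * g2) (1 - mu * (g2 - g1)))
       (lyap_r (2 - mu * g2) (1 - mu * (g2 - g1))) (x + y) x.

Definition contracting_mode (g1 g2 th mu : R) : Prop :=
  (forall x y, th * (x * x + y * y) <= mode_lyap g1 g2 mu x y) /\
  (forall x y e, mode_lyap g1 g2 mu (x + y) (y - mu * (g1 * x + g2 * y) + e)
                 <= (1 - th) * mode_lyap g1 g2 mu x y + / th * (e * e)).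

Lemma contracting_mode_le g1 g2 th th' mu :
  contracting_mode g1 g2 th mu -> 0 < th' <= th -> contracting_mode g1 g2 th' mu.
Proof.
intros [Hlow Hstep] Hth'.
assert (Hpos : forall x y, 0 <= mode_lyap g1 g2 mu x y).
{ intros x y. assert (H := Hlow x y).
  assert (0 <= x * x) by apply Rle_0_sqr. assert (0 <= y * y) by apply Rle_0_sqr. nra. }
assert (Hinv : / th <= / th') by (apply Rinv_le_contravar; lra).
split.
- intros x y. assert (H := Hlow x y).
  assert (0 <= x * x) by apply Rle_0_sqr. assert (0 <= y * y) by apply Rle_0_sqr. nra.
- intros x y e. assert (H := Hstep x y e). assert (H0 := Hpos x y).
  assert (0 <= e * e) by apply Rle_0_sqr. nra.
Qed.

Lemma mode_contracting g1 g2 mu : 0 < g1 < g2 -> 0 < mu -> (g1 - 2 * g2) * mu > -4 ->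
  exists th, 0 < th <= 1 /\ contracting_mode g1 g2 th mu.
Proof.
intros Hg Hmu Hstab.
destruct (companion_contract (2 - mu * g2) (1 - mu * (g2 - g1))) as [th [Hth [Hlow Hstep]]];
  try nra.
exists (th / 3). split; [lra|]. split.
- intros x y. unfold mode_lyap. assert (H := Hlow (x + y) x).
  assert (x * x + y * y <= 3 * ((x + y) * (x + y) + x * x)).
  { assert (0 <= (3 * x + 2 * y) * (3 * x + 2 * y)) by apply Rle_0_sqr.
    assert (0 <= x * x) by apply Rle_0_sqr. nra. }
  nra.
- intros x y e. unfold mode_lyap.
  replace (x + y + (y - mu * (g1 * x + g2 * y) + e))
    with ((2 - mu * g2) * (x + y) - (1 - mu * (g2 - g1)) * x + e) by ring.
  eapply Rle_trans; [apply Hstep|].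
  assert (0 <= quad (lyap_q (2 - mu * g2) (1 - mu * (g2 - g1)))
                    (lyap_r (2 - mu * g2) (1 - mu * (g2 - g1))) (x + y) x).
  { assert (H := Hlow (x + y) x).
    assert (0 <= (x + y) * (x + y)) by apply Rle_0_sqr.
    assert (0 <= x * x) by apply Rle_0_sqr. nra. }
  assert (/ th <= / (th / 3)) by (apply Rinv_le_contravar; lra).
  assert (0 <= e * e) by apply Rle_0_sqr. nra.
Qed.

Lemma exists_uniform_pos (n : nat) (Q : nat -> R -> Prop) :
  (forall j e e', Q j e -> 0 < e' <= e -> Q j e') ->
  (forall j, (j < n)%nat -> exists e, 0 < e /\ Q j e) ->
  exists e, 0 < e /\ forall j, (j < n)%nat -> Q j e.
Proof.
intros Hmono. induction n as [|n IH]; intros H.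
- exists 1. split; [lra | intros; lia].
- destruct IH as [e1 [He1 Hq1]]; [intros; apply H; lia|].
  destruct (H n) as [e2 [He2 Hq2]]; [lia|].
  assert (Hmin : 0 < Rmin e1 e2) by (apply Rmin_pos; assumption).
  exists (Rmin e1 e2). split; [assumption|]. intros j Hj.
  destruct (Nat.eq_dec j n) as [->|Hne].
  + apply (Hmono n e2); [assumption|]. split; [assumption | apply Rmin_r].
  + apply (Hmono j e1); [apply Hq1; lia|]. split; [assumption | apply Rmin_l].
Qed.

Lemma exists_edge_weight_lb N (A : nat -> nat -> R) :
  exists m, 0 < m /\ forall i j, (i < N)%nat -> (j < N)%nat -> A i j > 0 -> m <= A i j.
Proof.
destruct (exists_uniform_pos N (fun i m => forall j, (j < N)%nat -> A i j > 0 -> m <= A i j))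
  as [m [Hm Hlb]].
- intros i e e' H He j Hj Hpos. specialize (H j Hj Hpos). lra.
- intros i Hi. apply (exists_uniform_pos N (fun j m => A i j > 0 -> m <= A i j)).
  + intros j e e' H He Hpos. specialize (H Hpos). lra.
  + intros j Hj. destruct (Rlt_or_le 0 (A i j)) as [Hpos|Hnp].
    * exists (A i j). split; [assumption | lra].
    * exists 1. split; lra.
- exists m. split; [assumption|]. intros i j Hi Hj. now apply Hlb.
Qed.

Lemma laplacian_frame_modes N A g1 g2 f mu :
  (forall i j, (i < N)%nat -> (j < N)%nat -> A i j = A j i) ->
  (forall i j, (i < N)%nat -> (j < N)%nat -> 0 <= A i j) ->
  (forall i, (i < N)%nat -> A i i = 0) ->
  connected N A -> 0 < g1 < g2 ->
  (forall lam, is_eigenvalue N (laplacian N A) lam -> lam <> 0 -> g1 - 2 * g2 > - (4 / lam)) ->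
  eigen_frame N (laplacian N A) f mu ->
  exists th, 0 < th <= 1 /\ forall j, (j < N + N)%nat ->
    (rsum N (f j) = 0 /\ contracting_mode g1 g2 th (mu j))
    \/ (forall i, (i < N)%nat -> f j i = f j 0%nat).
Proof.
intros Hsym Hnn Hdiag Hconn Hg Hstab [Heig _].
destruct (exists_uniform_pos (N + N) (fun j th =>
   (rsum N (f j) = 0 /\ contracting_mode g1 g2 th (mu j))
   \/ (forall i, (i < N)%nat -> f j i = f j 0%nat))) as [e [He Hmodes]].
- intros j th th' [[Hs Hc]|Hc] Hth; [left | right]; auto.
  split; [assumption|]. now apply contracting_mode_le with th.
- intros j Hj.
  assert (Hfj : forall i, (i < N)%nat -> mxv N (laplacian N A) (f j) i = mu j * f j i)
    by (intros i Hi; now apply Heig).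
  destruct (laplacian_eigvec_cases N A Hsym Hdiag Hnn (f j) (mu j) Hfj Hconn)
    as [[Hmu [Hev Hsum]]|Hconst].
  + assert (Hmu4 : (g1 - 2 * g2) * mu j > -4).
    { assert (H := Hstab (mu j) Hev ltac:(lra)).
      replace (-4) with (- (4 / mu j) * mu j) by (field; lra).
      now apply Rmult_gt_compat_r. }
    destruct (mode_contracting g1 g2 (mu j) Hg Hmu Hmu4) as [th [Hth Hc]].
    exists th. split; [lra|]. now left.
  + exists 1. split; [lra|]. now right.
- exists (Rmin e 1).
  assert (Hmin : 0 < Rmin e 1 <= e) by (split; [apply Rmin_pos; lra | apply Rmin_l]).
  split; [split; [lra | apply Rmin_r]|].
  intros j Hj. destruct (Hmodes j Hj) as [[Hs Hc]|Hc]; [left | right]; auto.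
  split; [assumption|]. now apply contracting_mode_le with e.
Qed.

(** * Spread about the mean *)

Definition mean (N : nat) (x : nat -> R) : R := rsum N x / INR N.
Definition sqdev (N : nat) (x : nat -> R) : R :=
  rsum N (fun i => (x i - mean N x) * (x i - mean N x)).

Lemma rsum_sub_mean N x : (0 < N)%nat -> rsum N (fun i => x i - mean N x) = 0.
Proof.
intros HN. rewrite rsum_minus, rsum_const. unfold mean.
assert (0 < INR N) by (apply lt_0_INR; assumption). field. lra.
Qed.

Lemma sqdev_nonneg N x : 0 <= sqdev N x.
Proof. apply rsum_nonneg. intros; apply Rle_0_sqr. Qed.

Lemma sqdev_lin_le N a b x y :
  sqdev N (fun i => a * x i + b * y i) <= 2 * (a * a + b * b) * (sqdev N x + sqdev N y).
Proof.
assert (Hmean : mean N (fun i => a * x i + b * y i) = a * mean N x + b * mean N y)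
  by (unfold mean; rewrite rsum_plus, !rsum_scal_l; unfold Rdiv; ring).
unfold sqdev. rewrite Hmean, <- rsum_plus, <- rsum_scal_l. apply rsum_le. intros i Hi.
set (u := x i - mean N x). set (w := y i - mean N y).
replace (a * x i + b * y i - (a * mean N x + b * mean N y)) with (a * u + b * w)
  by (unfold u, w; ring).
assert (0 <= (a * u - b * w) * (a * u - b * w)) by apply Rle_0_sqr.
assert (0 <= (a * w) * (a * w)) by apply Rle_0_sqr.
assert (0 <= (b * u) * (b * u)) by apply Rle_0_sqr.
nra.
Qed.

Lemma diff_sq_le_sqdev N x i j : (i < N)%nat -> (j < N)%nat ->
  (x i - x j) * (x i - x j) <= 4 * sqdev N x.
Proof.
intros Hi Hj.
assert (Hterm : forall l, (l < N)%nat -> (x l - mean N x) * (x l - mean N x) <= sqdev N x)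
  by (intros l Hl; apply (rsum_term_le N (fun l => (x l - mean N x) * (x l - mean N x)));
      auto; intros; apply Rle_0_sqr).
assert (H1 := Hterm i Hi). assert (H2 := Hterm j Hj).
assert (0 <= (x i + x j - 2 * mean N x) * (x i + x j - 2 * mean N x)) by apply Rle_0_sqr.
nra.
Qed.

Lemma disturbance_sq_le N (D : nat -> nat -> R) (r : nat -> R) (dl : R) :
  (forall i l, (i < N)%nat -> (l < N)%nat -> Rabs (D i l) <= dl) ->
  rsum N (fun i => rsum N (fun l => D i l * (r l - r i)) * rsum N (fun l => D i l * (r l - r i)))
  <= 4 * INR N * INR N * (dl * dl) * sqdev N r.
Proof.
intros HD.
set (y := fun i => r i - mean N r).
assert (Hsq : sqdev N r = rsum N (fun i => y i * y i)) by reflexivity.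
assert (Hterm : forall i l, (i < N)%nat -> (l < N)%nat ->
   (D i l * (r l - r i)) * (D i l * (r l - r i)) <= 2 * (dl * dl) * (y l * y l + y i * y i)).
{ intros i l Hi Hl.
  replace (r l - r i) with (y l - y i) by (unfold y; ring).
  assert (HD2 : D i l * D i l <= dl * dl).
  { replace (D i l * D i l) with (Rabs (D i l) * Rabs (D i l))
      by (rewrite <- Rabs_mult; apply Rabs_right, Rle_ge, Rle_0_sqr).
    assert (H := HD i l Hi Hl). apply Rmult_le_compat; auto using Rabs_pos. }
  assert (0 <= (y l + y i) * (y l + y i)) by apply Rle_0_sqr.
  assert (0 <= (y l - y i) * (y l - y i)) by apply Rle_0_sqr.
  assert (0 <= D i l * D i l) by apply Rle_0_sqr.
  nra. }
assert (Hrow : forall i, (i < N)%nat ->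
   rsum N (fun l => D i l * (r l - r i)) * rsum N (fun l => D i l * (r l - r i))
   <= INR N * (2 * (dl * dl) * (sqdev N r + INR N * (y i * y i)))).
{ intros i Hi. eapply Rle_trans; [apply rsum_sq_le|].
  apply Rmult_le_compat_l; [apply pos_INR|].
  eapply Rle_trans; [apply rsum_le; intros l Hl; apply (Hterm i l Hi Hl)|].
  rewrite rsum_scal_l, rsum_plus, rsum_const, <- Hsq. lra. }
eapply Rle_trans; [apply rsum_le; exact Hrow|].
rewrite rsum_scal_l.
rewrite (rsum_ext N _ (fun i => 2 * (dl * dl) * sqdev N r + 2 * (dl * dl) * INR N * (y i * y i)))
  by (intros; ring).
rewrite rsum_plus, rsum_const, rsum_scal_l, <- Hsq. lra.
Qed.

(** * Consensus under a small perturbation of the coupling *)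

Lemma sq_geometric_cv (u : nat -> R) (C rho : R) : 0 <= rho < 1 -> 0 <= C ->
  (forall k, u k * u k <= C * rho ^ k) -> Un_cv u 0.
Proof.
intros Hrho HC Hu eps Heps.
assert (Hy : 0 < eps * eps / (C + 1)) by (apply Rdiv_lt_0_compat; nra).
destruct (pow_lt_1_zero rho ltac:(rewrite Rabs_right; lra) _ Hy) as [n0 Hn0].
exists n0. intros n Hn. specialize (Hn0 n Hn). specialize (Hu n).
unfold Rdist. rewrite Rminus_0_r.
assert (Hp : 0 <= rho ^ n) by (apply pow_le; lra).
rewrite Rabs_right in Hn0 by lra.
assert (Hsq : u n * u n < eps * eps).
{ apply Rle_lt_trans with ((C + 1) * rho ^ n); [nra|].
  replace (eps * eps) with ((C + 1) * (eps * eps / (C + 1))) by (field; lra).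
  apply Rmult_lt_compat_l; lra. }
apply Rnot_le_lt. intros Hge.
assert (eps * eps <= Rabs (u n) * Rabs (u n)) by (apply Rmult_le_compat; lra).
rewrite <- Rabs_mult, Rabs_right in H by (apply Rle_ge, Rle_0_sqr). lra.
Qed.

Section Perturbed_consensus.
Variables (N : nat) (M : nat -> nat -> R) (f : nat -> nat -> R) (mu : nat -> R).
Variables (g1 g2 th eps : R).
Hypothesis N_pos : (0 < N)%nat.
Hypothesis M_sym : forall i j, (i < N)%nat -> (j < N)%nat -> M i j = M j i.
Hypothesis frame : eigen_frame N M f mu.
Hypothesis modes : forall j, (j < N + N)%nat ->
  (rsum N (f j) = 0 /\ contracting_mode g1 g2 th (mu j))
  \/ (forall i, (i < N)%nat -> f j i = f j 0%nat).
Hypothesis th_pos : 0 < th <= 1.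
Hypothesis eps_small : 0 <= eps /\ 2 * eps <= th * th * th.

Variables (p v D : nat -> nat -> R).
Hypothesis p_step : forall k i, (i < N)%nat -> p (S k) i = p k i + v k i.
Hypothesis v_step : forall k i, (i < N)%nat ->
  v (S k) i = v k i - mxv N M (fun l => g1 * p k l + g2 * v k l) i + D k i.
Hypothesis D_small : forall k,
  rsum N (fun i => D k i * D k i) <= eps * (sqdev N (p k) + sqdev N (v k)).

(* Frame coordinates of the deviation from the mean: they vanish on constant frame vectors,
   so the consensus direction drops out of the Lyapunov function. *)
Let cdot j x := dot N (f j) (fun i => x i - mean N x).

Let lyap k := rsum (N + N) (fun j => mode_lyap g1 g2 (mu j) (cdot j (p k)) (cdot j (v k))).

Lemma sqdev_frame x : sqdev N x = rsum (N + N) (fun j => cdot j x * cdot j x).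
Proof. unfold cdot. destruct frame as [_ Hpar]. now rewrite Hpar. Qed.

Lemma cdot_zero_sum j x : rsum N (f j) = 0 -> cdot j x = dot N (f j) x.
Proof.
intros Hs. unfold cdot, dot.
rewrite (rsum_ext N _ (fun i => f j i * x i - mean N x * f j i)) by (intros; ring).
rewrite rsum_minus, rsum_scal_l, Hs. ring.
Qed.

Lemma cdot_const j x : (forall i, (i < N)%nat -> f j i = f j 0%nat) -> cdot j x = 0.
Proof.
intros Hc. unfold cdot, dot.
rewrite (rsum_ext N _ (fun i => f j 0%nat * (x i - mean N x))) by (intros; rewrite Hc; auto).
rewrite rsum_scal_l, rsum_sub_mean by assumption. ring.
Qed.

Lemma mode_lyap_step j k : (j < N + N)%nat ->
  th * (cdot j (p k) * cdot j (p k) + cdot j (v k) * cdot j (v k))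
    <= mode_lyap g1 g2 (mu j) (cdot j (p k)) (cdot j (v k)) /\
  mode_lyap g1 g2 (mu j) (cdot j (p (S k))) (cdot j (v (S k)))
    <= (1 - th) * mode_lyap g1 g2 (mu j) (cdot j (p k)) (cdot j (v k))
       + / th * (dot N (f j) (D k) * dot N (f j) (D k)).
Proof.
intros Hj. assert (He2 : 0 <= / th * (dot N (f j) (D k) * dot N (f j) (D k))).
{ apply Rmult_le_pos; [apply Rlt_le, Rinv_0_lt_compat; lra | apply Rle_0_sqr]. }
destruct (modes j Hj) as [[Hs [Hlow Hstep]]|Hc].
- rewrite !cdot_zero_sum by assumption. split; [apply Hlow|].
  destruct frame as [Heig _].
  assert (Hp : dot N (f j) (p (S k)) = dot N (f j) (p k) + dot N (f j) (v k)).
  { unfold dot. rewrite <- rsum_plus. apply rsum_ext. intros i Hi. rewrite p_step; auto; ring. }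
  assert (Hv : dot N (f j) (v (S k)) = dot N (f j) (v k)
     - mu j * (g1 * dot N (f j) (p k) + g2 * dot N (f j) (v k)) + dot N (f j) (D k)).
  { transitivity (dot N (f j) (v k) - dot N (f j) (mxv N M (fun l => g1 * p k l + g2 * v k l))
                  + dot N (f j) (D k)).
    - unfold dot. rewrite <- rsum_minus, <- rsum_plus. apply rsum_ext. intros i Hi.
      rewrite v_step by assumption. ring.
    - rewrite (dot_mxv_eigvec N M (f j) _ (mu j) M_sym) by (intros; apply Heig; auto).
      do 3 f_equal. unfold dot. rewrite <- !rsum_scal_l, <- rsum_plus.
      apply rsum_ext. intros; ring. }
  rewrite Hp, Hv. apply Hstep.
- rewrite !cdot_const by assumption.
  unfold mode_lyap, quad. rewrite Rplus_0_r. lra.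
Qed.

Lemma lyap_lower k : th * (sqdev N (p k) + sqdev N (v k)) <= lyap k.
Proof.
rewrite !sqdev_frame, <- rsum_plus, <- rsum_scal_l. apply rsum_le. intros j Hj.
apply mode_lyap_step; assumption.
Qed.

Lemma lyap_step k : lyap (S k) <= (1 - th / 2) * lyap k.
Proof.
destruct frame as [_ Hpar].
assert (Hsum : lyap (S k) <= (1 - th) * lyap k + / th * rsum N (fun i => D k i * D k i)).
{ rewrite <- Hpar. unfold lyap. rewrite <- !rsum_scal_l, <- rsum_plus.
  apply rsum_le. intros j Hj. apply mode_lyap_step; assumption. }
assert (Hlow := lyap_lower k). assert (HD := D_small k).
assert (Hs : 0 <= sqdev N (p k) + sqdev N (v k))
  by (apply Rplus_le_le_0_compat; apply sqdev_nonneg).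
set (s := sqdev N (p k) + sqdev N (v k)) in *.
assert (Hinv : 0 < / th) by (apply Rinv_0_lt_compat; lra).
assert (Heps : / th * rsum N (fun i => D k i * D k i) <= th / 2 * lyap k).
{ apply Rle_trans with (/ th * (eps * s)); [apply Rmult_le_compat_l; lra|].
  apply Rle_trans with (th / 2 * (th * s)); [|apply Rmult_le_compat_l; lra].
  replace (/ th * (eps * s)) with (eps / (th * th) * (th * s)) by (field; lra).
  apply Rmult_le_compat_r; [nra|].
  apply Rmult_le_reg_r with (th * th); [nra|].
  replace (eps / (th * th) * (th * th)) with eps by (field; lra). nra. }
lra.
Qed.

Lemma sqdev_geometric k :
  sqdev N (p k) + sqdev N (v k) <= / th * lyap 0%nat * (1 - th / 2) ^ k.
Proof.
assert (Hgeo : lyap k <= (1 - th / 2) ^ k * lyap 0%nat).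
{ induction k as [|k IH]; simpl; [lra|].
  eapply Rle_trans; [apply lyap_step|]. rewrite Rmult_assoc.
  apply Rmult_le_compat_l; [lra | assumption]. }
apply Rmult_le_reg_l with th; [lra|].
replace (th * (/ th * lyap 0%nat * (1 - th / 2) ^ k)) with ((1 - th / 2) ^ k * lyap 0%nat)
  by (field; lra).
eapply Rle_trans; [apply lyap_lower | exact Hgeo].
Qed.

Theorem perturbed_consensus i j : (i < N)%nat -> (j < N)%nat ->
  Un_cv (fun k => p k i - p k j) 0 /\ Un_cv (fun k => v k i - v k j) 0.
Proof.
intros Hi Hj.
assert (Hlyap0 : 0 <= lyap 0%nat).
{ eapply Rle_trans; [|apply lyap_lower].
  apply Rmult_le_pos; [lra|]. apply Rplus_le_le_0_compat; apply sqdev_nonneg. }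
assert (HC : 0 <= 4 * (/ th * lyap 0%nat)).
{ apply Rmult_le_pos; [lra|].
  apply Rmult_le_pos; [apply Rlt_le, Rinv_0_lt_compat; lra | assumption]. }
split; apply (sq_geometric_cv _ _ (1 - th / 2) ltac:(lra) HC); intros k;
  assert (H := sqdev_geometric k);
  assert (Hp := sqdev_nonneg N (p k)); assert (Hv := sqdev_nonneg N (v k)).
- assert (Hd := diff_sq_le_sqdev N (p k) i j Hi Hj). nra.
- assert (Hd := diff_sq_le_sqdev N (v k) i j Hi Hj). nra.
Qed.

End Perturbed_consensus.

(** * Factored edge weights *)

Lemma factored_weight_close c dA x y : 0 < dA < c ->
  sqrt (c - dA) < x < sqrt (c + dA) -> sqrt (c - dA) < y < sqrt (c + dA) ->
  Rabs (x * y - c) <= dA.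
Proof.
intros HdA Hx Hy.
assert (Hlo := sqrt_sqrt (c - dA) ltac:(lra)). assert (Hhi := sqrt_sqrt (c + dA) ltac:(lra)).
assert (Hlo0 := sqrt_pos (c - dA)).
set (s1 := sqrt (c - dA)) in *. set (s2 := sqrt (c + dA)) in *.
apply Rabs_le. split; nra.
Qed.

Lemma exists_small_gain m th c : 0 < m -> 0 < th <= 1 -> 0 <= c ->
  exists dA, 0 < dA < m /\ 2 * (c * (dA * dA)) <= th * th * th.
Proof.
intros Hm Hth Hc.
assert (Hth3 : 0 < th * th * th <= 1) by (assert (0 < th * th <= 1) by (split; nra); split; nra).
set (b := th * th * th / (2 * c + 2)).
assert (Hb : 0 < b) by (unfold b; apply Rdiv_lt_0_compat; lra).
assert (Hcb : (2 * c + 2) * b = th * th * th) by (unfold b; field; lra).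
exists (Rmin (m / 2) b).
assert (H1 : 0 < Rmin (m / 2) b) by (apply Rmin_pos; lra).
assert (H2 : Rmin (m / 2) b <= m / 2) by apply Rmin_l.
assert (H3 : Rmin (m / 2) b <= b) by apply Rmin_r.
split; [lra|].
assert (Rmin (m / 2) b * Rmin (m / 2) b <= b) by nra.
nra.
Qed.

Lemma factored_weights_close N (A0 alpha a : nat -> nat -> R) dA :
  (forall i j, (i < N)%nat -> (j < N)%nat -> A0 i j = A0 j i) ->
  (forall i j, (i < N)%nat -> (j < N)%nat -> 0 <= A0 i j) ->
  0 < dA -> (forall i j, (i < N)%nat -> (j < N)%nat -> A0 i j > 0 -> dA < A0 i j) ->
  (forall i j, (i < N)%nat -> (j < N)%nat -> A0 i j > 0 ->
     sqrt (A0 i j - dA) < alpha i j < sqrt (A0 i j + dA)) ->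
  (forall i j, (i < N)%nat -> (j < N)%nat -> A0 i j > 0 -> a i j = alpha i j * alpha j i) ->
  (forall i j, (i < N)%nat -> (j < N)%nat -> ~ (A0 i j > 0) -> a i j = 0) ->
  forall i j, (i < N)%nat -> (j < N)%nat -> Rabs (a i j - A0 i j) <= dA.
Proof.
intros Hsym Hnn HdA Hlt Halpha Ha Ha0 i j Hi Hj.
destruct (Rlt_dec 0 (A0 i j)) as [Hpos|Hnpos].
- rewrite Ha by assumption.
  apply factored_weight_close; [split; auto | now apply Halpha |].
  rewrite (Hsym i j) by assumption. apply Halpha; [assumption | assumption | now rewrite Hsym].
- rewrite Ha0 by assumption. assert (H := Hnn i j Hi Hj).
  replace (A0 i j) with 0 by lra. rewrite Rminus_0_r, Rabs_R0. lra.
Qed.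

Definition coupling_error N (A a : nat -> nat -> R) (r : nat -> R) (i : nat) : R :=
  rsum N (fun l => (a i l - A i l) * (r l - r i)).

Lemma coupling_split N (A a : nat -> nat -> R) g1 g2 (p v : nat -> R) i :
  (forall i, (i < N)%nat -> A i i = 0) -> (i < N)%nat ->
  rsum N (fun j => g1 * a i j * (p j - p i) + g2 * a i j * (v j - v i))
  = - mxv N (laplacian N A) (fun l => g1 * p l + g2 * v l) i
    + coupling_error N A a (fun l => g1 * p l + g2 * v l) i.
Proof.
intros Hdiag Hi. rewrite mxv_laplacian by assumption. unfold coupling_error.
rewrite <- rsum_opp, <- rsum_plus. apply rsum_ext. intros; ring.
Qed.

Lemma coupling_error_sq_le N (A a : nat -> nat -> R) g1 g2 dA (p v : nat -> R) :
  (forall i l, (i < N)%nat -> (l < N)%nat -> Rabs (a i l - A i l) <= dA) ->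
  rsum N (fun i => coupling_error N A a (fun l => g1 * p l + g2 * v l) i
                   * coupling_error N A a (fun l => g1 * p l + g2 * v l) i)
  <= 8 * INR N * INR N * (g1 * g1 + g2 * g2) * (dA * dA) * (sqdev N p + sqdev N v).
Proof.
intros Hclose. unfold coupling_error.
eapply Rle_trans; [apply (disturbance_sq_le N (fun i l => a i l - A i l)); exact Hclose|].
assert (H := sqdev_lin_le N g1 g2 p v).
assert (0 <= INR N * INR N * (dA * dA)) by (assert (0 <= INR N) by apply pos_INR; nra).
nra.
Qed.

Theorem theorem3 (N : nat) (A0 : nat -> nat -> R) (g1 g2 : R)
  (Hsym : forall i j, (i < N)%nat -> (j < N)%nat -> A0 i j = A0 j i)
  (Hnn : forall i j, (i < N)%nat -> (j < N)%nat -> 0 <= A0 i j)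
  (Hdiag : forall i, (i < N)%nat -> A0 i i = 0)
  (Hconn : connected N A0)
  (Hg : 0 < g1 /\ g1 < g2)
  (Hmu : forall mu, is_eigenvalue N (laplacian N A0) mu -> mu <> 0 ->
           g1 - 2 * g2 > - (4 / mu)) :
  exists dA : R,
    0 < dA /\
    (forall i j, (i < N)%nat -> (j < N)%nat -> A0 i j > 0 -> dA < A0 i j) /\
    forall (alpha : nat -> nat -> nat -> R)   (* alpha k i j = alpha_{i,j}^(k) *)
           (a : nat -> nat -> nat -> R)       (* a k i j = a_{ij}^(k) *)
           (p v : nat -> nat -> R),           (* p k i = p_i^(k), v k i = v_i^(k) *)
      (forall k i j, (i < N)%nat -> (j < N)%nat -> A0 i j > 0 ->
         sqrt (A0 i j - dA) < alpha k i j < sqrt (A0 i j + dA)) ->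
      (forall k i j, (i < N)%nat -> (j < N)%nat -> A0 i j > 0 ->
         a k i j = alpha k i j * alpha k j i) ->
      (forall k i j, (i < N)%nat -> (j < N)%nat -> ~ (A0 i j > 0) ->
         a k i j = 0) ->
      (forall k i, (i < N)%nat -> p (S k) i = p k i + v k i) ->
      (forall k i, (i < N)%nat ->
         v (S k) i = v k i +
           rsum N (fun j => g1 * a k i j * (p k j - p k i)
                            + g2 * a k i j * (v k j - v k i))) ->
      forall i j, (i < N)%nat -> (j < N)%nat ->
        Un_cv (fun k => p k i - p k j) 0 /\ Un_cv (fun k => v k i - v k j) 0.
Proof.
assert (HLsym := laplacian_sym N A0 Hsym).
destruct (Spectral_frame.symmetric_eigen_frame N (laplacian N A0) HLsym) as [f [mu Hframe]].
destruct (laplacian_frame_modes N A0 g1 g2 f mu Hsym Hnn Hdiag Hconn Hg Hmu Hframe)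
  as [th [Hth Hmodes]].
destruct (exists_edge_weight_lb N A0) as [m [Hm Hedge]].
set (c := 8 * INR N * INR N * (g1 * g1 + g2 * g2)).
assert (Hc : 0 <= c) by (assert (0 <= INR N) by apply pos_INR; unfold c; nra).
destruct (exists_small_gain m th c Hm Hth Hc) as [dA [HdA Hgain]].
assert (HdA_lt : forall i j, (i < N)%nat -> (j < N)%nat -> A0 i j > 0 -> dA < A0 i j)
  by (intros i j Hi Hj Hpos; specialize (Hedge i j Hi Hj Hpos); lra).
exists dA. split; [lra|]. split; [exact HdA_lt|].
intros alpha a p v Halpha Ha Ha0 Hp Hv i j Hi Hj.
assert (Hclose : forall k i l, (i < N)%nat -> (l < N)%nat -> Rabs (a k i l - A0 i l) <= dA)
  by (intros k; apply (factored_weights_close N A0 (alpha k)); auto; lra).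
apply (perturbed_consensus N (laplacian N A0) f mu g1 g2 th (c * (dA * dA)) ltac:(lia) HLsym
         Hframe Hmodes Hth ltac:(split; [nra | lra]) p v
         (fun k => coupling_error N A0 (a k) (fun l => g1 * p k l + g2 * v k l)));
  [assumption | | | assumption | assumption].
- intros k i' Hi'. rewrite Hv, (coupling_split N A0) by assumption. ring.
- intros k. apply coupling_error_sq_le. intros; now apply Hclose.
Qed.
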